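(* Let $I$ be an ideal on a cardinal $\kappa$ and $\theta$ a regular cardinal. The following are equivalent: (1) $I$ is weakly $\theta$-saturated and $\theta$-indecomposable. (2) Whenever $\langle B_i:i<\theta\rangle$ is a $\subseteq$-increasing sequence of subsets of $\kappa$, there is $i^*<\theta$ such that $B_i=_I\bigcup_{j<\theta}B_j$ for all $i$ with $i^*\leq i<\theta$. (3) Whenever $\langle A_i:i<\theta\rangle$ is a sequence of $I$-positive subsets of $\kappa$, $\bigcap_{i<\theta}\bigcup_{i\leq j<\theta}A_j\neq\emptyset$.
   Context: By an ideal on a cardinal $\kappa$ we mean a proper ideal on $\kappa$ containing all bounded subsets of $\kappa$. $I$-positive means not in $I$; $A=_I B$ means $A\setminus B,B\setminus A\in I$. $I$ is weakly $\theta$-saturated if there is no partition of $\kappa$ into $\theta$ pairwise disjoint $I$-positive sets. $I$ is $\theta$-indecomposable if whenever $\langle A_i:i<\theta\rangle$ are subsets of $\kappa$ with $\bigcup_{i<\theta}A_i\notin I$, there is $w\subseteq\theta$ with $|w|<\theta$ and $\bigcup_{i\in w}A_i\notin I$. *)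

(* Cardinals are represented von-Neumann style as initial
   ordinals: a type carrying a strict well-order such that no proper initial
   segment is equinumerous with (injects onto) the whole type. *)
From Stdlib Require Import Classical.

Definition inj_le {A B : Type} (X : A -> Prop) (Y : B -> Prop) : Prop :=
  exists f : {a : A | X a} -> {b : B | Y b},
    forall u v, f u = f v -> u = v.

Definition card_lt {A B : Type} (X : A -> Prop) (Y : B -> Prop) : Prop :=
  inj_le X Y /\ ~ inj_le Y X.

Definition fullset (T : Type) : T -> Prop := fun _ => True.

Definition well_order {T : Type} (lt : T -> T -> Prop) : Prop :=
  (forall x, ~ lt x x) /\
  (forall x y z, lt x y -> lt y z -> lt x z) /\
  (forall x y, lt x y \/ x = y \/ lt y x) /\
  well_founded lt.

Definition is_cardinal {T : Type} (lt : T -> T -> Prop) : Prop :=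
  well_order lt /\ forall a : T, ~ inj_le (fullset T) (fun x => lt x a).

Definition leo {T : Type} (lt : T -> T -> Prop) (x y : T) : Prop :=
  x = y \/ lt x y.

Definition is_regular_cardinal {T : Type} (lt : T -> T -> Prop) : Prop :=
  is_cardinal lt /\
  inj_le (fullset nat) (fullset T) /\
  forall S : T -> Prop,
    (forall a, exists b, S b /\ leo lt a b) -> ~ card_lt S (fullset T).

Definition bounded {K : Type} (lt : K -> K -> Prop) (X : K -> Prop) : Prop :=
  exists a, forall x, X x -> lt x a.

Definition is_ideal {K : Type} (lt : K -> K -> Prop) (I : (K -> Prop) -> Prop)
  : Prop :=
  I (fun _ => False) /\
  (forall X Y : K -> Prop, I Y -> (forall x, X x -> Y x) -> I X) /\
  (forall X Y : K -> Prop, I X -> I Y -> I (fun x => X x \/ Y x)) /\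
  ~ I (fullset K) /\
  (forall X, bounded lt X -> I X).

Definition positive {K : Type} (I : (K -> Prop) -> Prop) (X : K -> Prop) :=
  ~ I X.

Definition eqI {K : Type} (I : (K -> Prop) -> Prop) (X Y : K -> Prop) :=
  I (fun x => X x /\ ~ Y x) /\ I (fun x => Y x /\ ~ X x).

Definition weakly_saturated {K Th : Type} (I : (K -> Prop) -> Prop) : Prop :=
  ~ exists P : Th -> K -> Prop,
      (forall i, positive I (P i)) /\
      (forall i j x, i <> j -> P i x -> P j x -> False) /\
      (forall x, exists i, P i x).

Definition indecomposable {K Th : Type} (I : (K -> Prop) -> Prop) : Prop :=
  forall A : Th -> K -> Prop,
    positive I (fun x => exists i, A i x) ->
    exists w : Th -> Prop,
      card_lt w (fullset Th) /\ positive I (fun x => exists i, w i /\ A i x).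

(* (1) -> (3): if some theta-sequence of I-positive sets had empty limsup, the
   tails D_i = U_{j >= i} A_j would decrease to the empty set.  Indecomposability
   then yields, above each i, an index f(i) with D_i \ D_{f(i)} positive, and
   regularity of theta lets us choose theta many pairwise disjoint such gaps,
   contradicting weak saturation.
   (3) -> (2): the differences U_j B_j \ B_i of an increasing chain decrease and
   have empty limsup, so by (3) they are eventually in I.
   (2) -> (1): apply (2) to the partial unions U_{j <= i} A_j. *)
From Stdlib Require Import Classical ClassicalEpsilon.
From Stdlib Require Import FunctionalExtensionality ProofIrrelevance.

Lemma sig_ext {A : Type} (P : A -> Prop) (u v : {a | P a}) :
  proj1_sig u = proj1_sig v -> u = v.
Proof. apply eq_sig_hprop; intros; apply proof_irrelevance. Qed.

Lemma inj_le_trans {A B C : Type} (X : A -> Prop) (Y : B -> Prop) (Z : C -> Prop) :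
  inj_le X Y -> inj_le Y Z -> inj_le X Z.
Proof.
  intros [f Hf] [g Hg]. exists (fun u => g (f u)). intros u v E. auto.
Qed.

Lemma inj_le_subset {A : Type} (X Y : A -> Prop) :
  (forall a, X a -> Y a) -> inj_le X Y.
Proof.
  intros HXY. exists (fun u => exist Y (proj1_sig u) (HXY _ (proj2_sig u))).
  intros u v E. apply sig_ext. exact (f_equal (@proj1_sig _ _) E).
Qed.

Lemma card_lt_inj_le {A B C : Type} (X : A -> Prop) (Y : B -> Prop) (Z : C -> Prop) :
  inj_le X Y -> card_lt Y Z -> card_lt X Z.
Proof.
  intros HXY [HYZ HnZY]. split; [exact (inj_le_trans _ _ _ HXY HYZ)|].
  intros HZX. exact (HnZY (inj_le_trans _ _ _ HZX HXY)).
Qed.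

Lemma inj_le_dep_image {A B : Type} (X : A -> Prop) (r : forall a, X a -> B) :
  inj_le (fun y => exists a (H : X a), y = r a H) X.
Proof.
  destruct (choice (fun (u : {y | exists a (H : X a), y = r a H}) (s : {a | X a}) =>
              proj1_sig u = r (proj1_sig s) (proj2_sig s))) as [c Hc].
  { intros [y [a [H ->]]]. exists (exist X a H). reflexivity. }
  exists c. intros u v E. apply sig_ext. rewrite (Hc u), (Hc v), E. reflexivity.
Qed.

Section WellOrder.

Variables (T : Type) (lt : T -> T -> Prop).
Hypothesis lt_wo : well_order lt.

Lemma leo_or_gt (i j : T) : leo lt i j \/ lt j i.
Proof.
  destruct lt_wo as [_ [_ [Htot _]]].
  destruct (Htot i j) as [h|[h|h]]; unfold leo; auto.
Qed.

Lemma leo_trans (i j k : T) : leo lt i j -> leo lt j k -> leo lt i k.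
Proof.
  destruct lt_wo as [_ [Htr _]]. intros [->|Hij] [<-|Hjk]; unfold leo; eauto.
Qed.

Lemma leo_lt_false (i j : T) : leo lt j i -> lt i j -> False.
Proof.
  destruct lt_wo as [Hirr [Htr _]]. intros [->|Hji] Hij.
  - exact (Hirr _ Hij).
  - exact (Hirr _ (Htr _ _ _ Hij Hji)).
Qed.

End WellOrder.

Section RegularCardinal.

Variables (T : Type) (lt : T -> T -> Prop).
Hypothesis lt_regular : is_regular_cardinal lt.

Lemma regular_well_order : well_order lt.
Proof. exact (proj1 (proj1 lt_regular)). Qed.

Lemma regular_inhabited : inhabited T.
Proof.
  destruct lt_regular as [_ [[e _] _]].
  exact (inhabits (proj1_sig (e (exist _ 0 Logic.I)))).
Qed.

Lemma small_bounded (w : T -> Prop) :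
  card_lt w (fullset T) -> exists a, forall b, w b -> lt b a.
Proof.
  intros Hw. apply NNPP; intros Hnb.
  apply (proj2 (proj2 lt_regular) w); [|exact Hw].
  intros a. apply NNPP; intros Hna. apply Hnb. exists a. intros b wb.
  destruct (leo_or_gt _ _ regular_well_order a b) as [Hab|]; [|assumption].
  exfalso; eauto.
Qed.

Lemma regular_unbounded (i : T) : exists j, lt i j.
Proof.
  apply NNPP; intros Hmax.
  apply (proj2 (proj2 lt_regular) (fun y => y = i)).
  - intros a. exists i. split; [reflexivity|].
    destruct (leo_or_gt _ _ regular_well_order a i) as [|Hia]; [assumption|].
    exfalso; eauto.
  - split; [apply inj_le_subset; intros; exact Logic.I|].
    intros Hi. destruct (inj_le_trans _ _ _ (proj1 (proj2 lt_regular)) Hi) as [h Hh].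
    assert (E : exist (fullset nat) 0 Logic.I = exist (fullset nat) 1 Logic.I).
    { apply Hh, sig_ext. rewrite (proj2_sig (h (exist _ 0 _))), (proj2_sig (h (exist _ 1 _))).
      reflexivity. }
    discriminate E.
Qed.

Lemma segment_small (a : T) : card_lt (fun b => lt b a) (fullset T).
Proof.
  split; [apply inj_le_subset; intros; exact Logic.I|]. exact (proj2 (proj1 lt_regular) a).
Qed.

Lemma closed_segment_small (a : T) : card_lt (fun b => leo lt b a) (fullset T).
Proof.
  destruct (regular_unbounded a) as [c Hac].
  apply (card_lt_inj_le _ (fun b => lt b c)); [|apply segment_small].
  apply inj_le_subset. intros b Hba.
  destruct (leo_or_gt _ _ regular_well_order c b) as [Hcb|]; [|assumption].
  pose proof (leo_trans _ _ regular_well_order _ _ _ Hcb Hba) as Hca.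
  exfalso. exact (leo_lt_false _ _ regular_well_order _ _ Hca Hac).
Qed.

Lemma dep_image_bounded (a : T) (r : forall b, lt b a -> T) :
  exists c, forall b (H : lt b a), lt (r b H) c.
Proof.
  destruct (small_bounded (fun y => exists b (H : lt b a), y = r b H)) as [c Hc].
  - exact (card_lt_inj_le _ _ _ (inj_le_dep_image _ r) (segment_small a)).
  - exists c. intros b H. apply Hc. eauto.
Qed.

(* Built by well-founded recursion: [g a] is a bound of all [f (g b)], [b < a]. *)
Lemma regular_dominating_sequence (f : T -> T) :
  exists g : T -> T, forall a b, lt b a -> lt (f (g b)) (g a).
Proof.
  destruct regular_well_order as [_ [_ [_ Hwf]]].
  pose (F := fun a (r : forall b, lt b a -> T) =>
    proj1_sig (constructive_indefinite_description _
      (dep_image_bounded a (fun b H => f (r b H))))).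
  assert (F_ext : forall x (r1 r2 : forall y, lt y x -> T),
             (forall y p, r1 y p = r2 y p) -> F x r1 = F x r2).
  { intros x r1 r2 E. replace r2 with r1; [reflexivity|].
    extensionality y. extensionality p. apply E. }
  exists (Fix Hwf (fun _ => T) F). intros a b Hba.
  rewrite (Fix_eq Hwf (fun _ => T) F F_ext a).
  exact (proj2_sig (constructive_indefinite_description _
    (dep_image_bounded a (fun y _ => f (Fix Hwf (fun _ => T) F y)))) b Hba).
Qed.

End RegularCardinal.
Section IdealOnKappa.

Variables (K Th : Type) (ltT : Th -> Th -> Prop) (I : (K -> Prop) -> Prop).
Hypothesis I_empty : I (fun _ => False).
Hypothesis I_subset : forall X Y : K -> Prop, I Y -> (forall x, X x -> Y x) -> I X.
Hypothesis I_union : forall X Y : K -> Prop, I X -> I Y -> I (fun x => X x \/ Y x).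
Hypothesis Th_regular : is_regular_cardinal ltT.

Let ltT_wo : well_order ltT := regular_well_order _ _ Th_regular.

Definition union_upto (A : Th -> K -> Prop) (i : Th) (x : K) : Prop :=
  exists j, leo ltT j i /\ A j x.

Definition union_from (A : Th -> K -> Prop) (i : Th) (x : K) : Prop :=
  exists j, leo ltT i j /\ A j x.

Definition limsup (A : Th -> K -> Prop) (x : K) : Prop := forall i, union_from A i x.

Definition chains_stabilize_mod_I : Prop :=
  forall B : Th -> K -> Prop,
    (forall i j x, leo ltT i j -> B i x -> B j x) ->
    exists istar, forall i, leo ltT istar i -> eqI I (B i) (fun x => exists j, B j x).

Definition positive_limsup_nonempty : Prop :=
  forall A : Th -> K -> Prop, (forall i, positive I (A i)) -> exists x, limsup A x.

Lemma I_of_diff (X Y : K -> Prop) : I (fun x => Y x /\ ~ X x) -> I X -> I Y.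
Proof.
  intros HYX HX. apply (I_subset _ _ (I_union _ _ HYX HX)).
  intros x Yx. destruct (classic (X x)); auto.
Qed.

Lemma union_upto_increasing (A : Th -> K -> Prop) (i j : Th) (x : K) :
  leo ltT i j -> union_upto A i x -> union_upto A j x.
Proof.
  intros Hij [k [Hki Akx]]. exists k.
  split; [exact (leo_trans _ _ ltT_wo _ _ _ Hki Hij)|exact Akx].
Qed.

Lemma union_from_decreasing (A : Th -> K -> Prop) (i j : Th) (x : K) :
  leo ltT i j -> union_from A j x -> union_from A i x.
Proof.
  intros Hij [k [Hjk Akx]]. exists k.
  split; [exact (leo_trans _ _ ltT_wo _ _ _ Hij Hjk)|exact Akx].
Qed.

Lemma weakly_saturated_no_disjoint_family (P : Th -> K -> Prop) :
  @weakly_saturated K Th I -> (forall i, positive I (P i)) ->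
  (forall i j x, i <> j -> P i x -> P j x -> False) -> False.
Proof.
  intros Hsat Ppos Pdisj. destruct (regular_inhabited _ _ Th_regular) as [t0].
  apply Hsat. exists (fun i x => P i x \/ (i = t0 /\ ~ exists j, P j x)).
  split; [|split].
  - intros i Hi. apply (Ppos i), (I_subset _ _ Hi). auto.
  - intros i j x Hij [Hi|[-> Hi]] [Hj|[-> Hj]]; eauto.
  - intros x. destruct (classic (exists j, P j x)) as [[j Hj]|Hx]; eauto.
Qed.

Lemma indecomposable_gap (D : Th -> K -> Prop) (i : Th) :
  @indecomposable K Th I ->
  (forall i j x, leo ltT i j -> D j x -> D i x) ->
  (forall x, exists j, ~ D j x) ->
  positive I (D i) -> exists a, positive I (fun x => D i x /\ ~ D a x).
Proof.
  intros Hind Ddec Dout Dpos.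
  destruct (Hind (fun k x => D i x /\ ~ D k x)) as [w [Hw Hpos]].
  - intros HU. apply Dpos, (I_subset _ _ HU). intros x Dx.
    destruct (Dout x) as [k Hk]. eauto.
  - destruct (small_bounded _ _ Th_regular w Hw) as [a Ha]. exists a.
    intros Hgap. apply Hpos, (I_subset _ _ Hgap). intros x [k [wk [Dix nDkx]]].
    split; [exact Dix|]. intros Dax. apply nDkx, (Ddec k a); [right; auto|exact Dax].
Qed.

Lemma decreasing_gaps_disjoint (D : Th -> K -> Prop) (f g : Th -> Th) :
  (forall i j x, leo ltT i j -> D j x -> D i x) ->
  (forall a b, ltT b a -> ltT (f (g b)) (g a)) ->
  forall a b x, a <> b ->
    D (g a) x -> ~ D (f (g a)) x -> D (g b) x -> ~ D (f (g b)) x -> False.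
Proof.
  intros Ddec Hg a b x Hab Da nDa Db nDb. destruct ltT_wo as [_ [_ [Htot _]]].
  destruct (Htot a b) as [Hlt|[Heq|Hlt]]; [|exact (Hab Heq)|].
  - apply nDa, (Ddec _ (g b)); [right; auto|exact Db].
  - apply nDb, (Ddec _ (g a)); [right; auto|exact Da].
Qed.

Lemma saturated_limsup_nonempty :
  @weakly_saturated K Th I -> @indecomposable K Th I -> positive_limsup_nonempty.
Proof.
  intros Hsat Hind A Apos. apply NNPP; intros Hnone.
  set (D := union_from A).
  assert (Ddec : forall i j x, leo ltT i j -> D j x -> D i x)
    by apply union_from_decreasing.
  assert (Dout : forall x, exists j, ~ D j x).
  { intros x. apply NNPP; intros Hx. apply Hnone. exists x. intros i.
    apply NNPP; intros Hi. eauto. }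
  assert (Dpos : forall i, positive I (D i)).
  { intros i Hi. apply (Apos i), (I_subset _ _ Hi).
    intros x Ax. exists i. split; [left|]; auto. }
  destruct (choice _ (fun i => indecomposable_gap D i Hind Ddec Dout (Dpos i))) as [f Hf].
  destruct (regular_dominating_sequence _ _ Th_regular f) as [g Hg].
  apply (weakly_saturated_no_disjoint_family (fun a x => D (g a) x /\ ~ D (f (g a)) x) Hsat).
  - intros a. exact (Hf (g a)).
  - intros a b x Hab [Da nDa] [Db nDb].
    exact (decreasing_gaps_disjoint D f g Ddec Hg a b x Hab Da nDa Db nDb).
Qed.

Lemma limsup_chain_differences_empty (B : Th -> K -> Prop) (x : K) :
  (forall i j x, leo ltT i j -> B i x -> B j x) ->
  ~ limsup (fun i x => (exists j, B j x) /\ ~ B i x) x.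
Proof.
  intros HB Hx. destruct (regular_inhabited _ _ Th_regular) as [t0].
  destruct (Hx t0) as [j [_ [[j0 Bx] _]]].
  destruct (Hx j0) as [j1 [Hj01 [_ nBx]]]. exact (nBx (HB _ _ _ Hj01 Bx)).
Qed.

Lemma limsup_chains_stabilize : positive_limsup_nonempty -> chains_stabilize_mod_I.
Proof.
  intros H3 B HB. apply NNPP; intros Hn.
  destruct (H3 (fun i x => (exists j, B j x) /\ ~ B i x)) as [x Hx].
  - intros i Hi. apply Hn. exists i. intros k Hik. split.
    + apply (I_subset _ _ I_empty). intros x [Bx nUx]. eauto.
    + apply (I_subset _ _ Hi). intros x [Ux nBx]. split; [exact Ux|].
      intros Bx. exact (nBx (HB _ _ _ Hik Bx)).
  - exact (limsup_chain_differences_empty B x HB Hx).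
Qed.

Lemma chains_stabilize_weakly_saturated :
  chains_stabilize_mod_I -> @weakly_saturated K Th I.
Proof.
  intros H2 [P [Ppos [Pdisj _]]].
  destruct (H2 (union_upto P) (union_upto_increasing P)) as [i Hi].
  destruct (regular_unbounded _ _ Th_regular i) as [j Hij].
  apply (Ppos j), (I_subset _ _ (proj2 (Hi i (or_introl eq_refl)))).
  intros x Px. split.
  - exists j, j. split; [left|]; auto.
  - intros [k [Hki Pkx]]. apply (Pdisj k j x); [|exact Pkx|exact Px].
    intros ->. exact (leo_lt_false _ _ ltT_wo _ _ Hki Hij).
Qed.

Lemma chains_stabilize_indecomposable :
  chains_stabilize_mod_I -> @indecomposable K Th I.
Proof.
  intros H2 A HA.
  destruct (H2 (union_upto A) (union_upto_increasing A)) as [i Hi].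
  exists (fun j => leo ltT j i). split; [exact (closed_segment_small _ _ Th_regular i)|].
  intros HS. apply HA, (I_of_diff (union_upto A i)); [|exact HS].
  apply (I_subset _ _ (proj2 (Hi i (or_introl eq_refl)))).
  intros x [[j Ajx] nSx]. split; [|exact nSx]. exists j, j. split; [left|]; auto.
Qed.

End IdealOnKappa.

Theorem proposition2p3
  (K : Type) (ltK : K -> K -> Prop) (Th : Type) (ltT : Th -> Th -> Prop)
  (I : (K -> Prop) -> Prop) :
  is_cardinal ltK -> is_ideal ltK I -> is_regular_cardinal ltT ->
  ((@weakly_saturated K Th I /\ @indecomposable K Th I) <->
   (forall B : Th -> K -> Prop,
      (forall i j x, leo ltT i j -> B i x -> B j x) ->
      exists istar, forall i, leo ltT istar i ->
        eqI I (B i) (fun x => exists j, B j x))) /\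
  ((@weakly_saturated K Th I /\ @indecomposable K Th I) <->
   (forall A : Th -> K -> Prop,
      (forall i, positive I (A i)) ->
      exists x, forall i, exists j, leo ltT i j /\ A j x)).
Proof.
  intros _ [I_empty [I_subset [I_union _]]] Hreg.
  assert (H13 : @weakly_saturated K Th I /\ @indecomposable K Th I ->
                positive_limsup_nonempty K Th ltT I).
  { intros [Hsat Hind]. exact (saturated_limsup_nonempty _ _ _ _ I_subset Hreg Hsat Hind). }
  assert (H32 : positive_limsup_nonempty K Th ltT I -> chains_stabilize_mod_I K Th ltT I)
    by exact (limsup_chains_stabilize _ _ _ _ I_empty I_subset Hreg).
  assert (H21 : chains_stabilize_mod_I K Th ltT I ->
                @weakly_saturated K Th I /\ @indecomposable K Th I).
  { intros H2. split.
    - exact (chains_stabilize_weakly_saturated _ _ _ _ I_subset Hreg H2).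
    - exact (chains_stabilize_indecomposable _ _ _ _ I_subset I_union Hreg H2). }
  split; split.
  - intros H1. exact (H32 (H13 H1)).
  - exact H21.
  - exact H13.
  - intros H3. exact (H21 (H32 H3)).
Qed.
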